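(* The Cesàro operator $\mathcal C: VH(\mathbb D)\to VH(\mathbb D)$ is not power bounded, not mean ergodic and not supercyclic.
   Context: $\mathbb D$ is the open unit disc. Define $v(z)=1$ if $|z|\le 1-1/e$ and $v(z)=(-\log(1-|z|))^{-1}$ if $1-1/e\le|z|<1$, $v_k=v^k$, $H^\infty_{v_k}=\{f \text{ analytic on }\mathbb D:\sup_{z\in\mathbb D}v_k(z)|f(z)|<\infty\}$ normed by this sup, and $VH(\mathbb D)=\bigcup_kH^\infty_{v_k}$ with the finest locally convex topology making all inclusions continuous. The Cesàro operator is $\mathcal C f(z)=\frac1z\int_0^z\frac{f(\zeta)}{1-\zeta}\,d\zeta$ for $z\neq0$, $\mathcal Cf(0)=f(0)$. For a locally convex Hausdorff space $X$ and continuous linear $T:X\to X$: $T$ is power bounded if $\{T^n:n\in\mathbb N_0\}$ is equicontinuous; $T$ is mean ergodic if the Cesàro means $T_{[n]}=\frac1n\sum_{m=1}^nT^m$ converge pointwise on $X$ (i.e. $(T_{[n]}x)_n$ converges in $X$ for every $x\in X$); $T$ is supercyclic if there exists $z\in X$ with $\{\lambda T^nz:\lambda\in\mathbb C,n\in\mathbb N_0\}$ dense in $X$. *)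

From Stdlib Require Import Reals.
From Coquelicot Require Import Coquelicot.
Open Scope R_scope.

Definition inD (z : C) : Prop := Cmod z < 1.

(** The weight v and v_k = v^k (only values on the disc matter). *)
Definition v (z : C) : R :=
  if Rle_dec (Cmod z) (1 - / exp 1) then 1
  else / (- ln (1 - Cmod z)).

Definition vk (k : nat) (z : C) : R := (v z) ^ k.

Definition holo (f : C -> C) : Prop :=
  forall z, inD z -> ex_derive (K := C_AbsRing) (V := C_NormedModule) f z.

Definition wbound (k : nat) (f : C -> C) (M : R) : Prop :=
  forall z, inD z -> vk k z * Cmod (f z) <= M.

Definition Hv (k : nat) (f : C -> C) : Prop :=
  holo f /\ exists M, wbound k f M.

Definition VH (f : C -> C) : Prop := exists k, Hv k f.

Definition fadd (f g : C -> C) : C -> C := fun z => (f z + g z)%C.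
Definition fsub (f g : C -> C) : C -> C := fun z => (f z - g z)%C.
Definition fscal (a : C) (f : C -> C) : C -> C := fun z => (a * f z)%C.

Definition seminorm_VH (p : (C -> C) -> R) : Prop :=
  (forall f, VH f -> 0 <= p f) /\
  (forall f g, VH f -> VH g -> p (fadd f g) <= p f + p g) /\
  (forall a f, VH f -> p (fscal a f) = Cmod a * p f).

(** Continuous seminorms for the inductive limit topology (finest locally convex
    topology making all inclusions H^infty_{v_k} -> VH continuous): exactly the
    seminorms whose restriction to each H^infty_{v_k} is continuous, i.e.
    p f <= c * ||f||_{v_k} (stated as: p f <= c*M for every bound M of the
    weighted sup). These seminorms generate the topology of VH(D). *)
Definition cont_seminorm (p : (C -> C) -> R) : Prop :=
  seminorm_VH p /\
  forall k, exists c, forall f M, Hv k f -> wbound k f M -> p f <= c * M.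

Definition cint0 (g : C -> C) (z : C) : C :=
  RInt (V := C_R_CompleteNormedModule) (fun t : R => (g (RtoC t * z) * z)%C) 0 1.

Definition Ces (f : C -> C) : C -> C :=
  fun z => if Req_EM_T (Cmod z) 0 then f (RtoC 0)
           else (/ z * cint0 (fun w => (f w / (RtoC 1 - w))%C) z)%C.

Definition powop (T : (C -> C) -> (C -> C)) (n : nat) (f : C -> C) : C -> C :=
  Nat.iter n T f.

Fixpoint psum (T : (C -> C) -> (C -> C)) (n : nat) (f : C -> C) : C -> C :=
  match n with
  | O => fun _ => RtoC 0
  | S n' => fadd (psum T n' f) (powop T (S n') f)
  end.

Definition cesmean (T : (C -> C) -> (C -> C)) (n : nat) (f : C -> C) : C -> C :=
  fscal (RtoC (/ INR n)) (psum T n f).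

Definition power_bounded_VH (T : (C -> C) -> (C -> C)) : Prop :=
  forall p, cont_seminorm p ->
    exists q, cont_seminorm q /\
      forall (n : nat) f, VH f -> p (powop T n f) <= q f.

Definition mean_ergodic_VH (T : (C -> C) -> (C -> C)) : Prop :=
  forall f, VH f -> exists g, VH g /\
    forall p, cont_seminorm p ->
      is_lim_seq (fun n : nat => p (fsub (cesmean T (S n) f) g)) 0.

Definition supercyclic_VH (T : (C -> C) -> (C -> C)) : Prop :=
  exists z, VH z /\
    forall g, VH g -> forall p, cont_seminorm p -> forall eps, 0 < eps ->
      exists (lam : C) (n : nat), p (fsub (fscal lam (powop T n z)) g) < eps.

(* On the real segment the Cesàro operator acts by
     Ces f (r) = \int_0^1 f(t r) / (1 - t r) dt.
   Non-supercyclicity: Ces fixes f(0) and preserves every bound |f(s)| <= A/(1-s) on [0,1/2],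
   so for every orbit the ratio Ces^n z(1/2) / Ces^n z(0) stays bounded, and no multiple of an
   iterate can approximate a function with f(0) = 1 and a huge value at 1/2.
   The iterates H_n = Ces^n 1 are real, increasing in n, and satisfy
     L^n / n! <= H_n <= (1 + L)^n,   L(r) = -log(1 - r),
   while elements of H^inf_{v_k} are O(L^k) along the radius.
   Non-mean-ergodicity: at the point where L = l the Cesàro means of (H_n) eventually exceed
   H_{k+1}/2 >= l^{k+1}/(2 (k+1)!), which beats the O(l^k) value of any candidate limit in
   H^inf_{v_k}.
   Non-power-boundedness: with l_j = (2j+2)! and L(x_j) = l_j, the seminorm
   sup_j |f(x_j)| / l_j^j is continuous on VH(D) and finite on each H_n, but is >= j on H_{2j},
   whereas equicontinuity would bound it on all H_n by one continuous seminorm of 1. *)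

From Stdlib Require Import Reals Lra Lia Factorial.
From Coquelicot Require Import Coquelicot.
Open Scope R_scope.

(** * The Cesàro operator along the real radius *)

Definition radially_continuous (f : C -> C) : Prop :=
  forall r, -1 < r < 1 -> continuous (fun s : R => f (RtoC s)) r.

Lemma RtoC_continuous (r : R) :
  @continuous R_UniformSpace (AbsRing_UniformSpace C_AbsRing) RtoC r.
Proof.
  apply filterlim_locally. intros eps. exists eps. intros s Hs.
  change (Cmod (RtoC s - RtoC r)%C < eps).
  rewrite <- RtoC_minus, Cmod_R. exact Hs.
Qed.

Lemma inD_RtoC (r : R) : -1 < r < 1 -> inD (RtoC r).
Proof. intros Hr. unfold inD. rewrite Cmod_R. apply Rabs_def1; lra. Qed.

Lemma holo_radially_continuous (f : C -> C) : holo f -> radially_continuous f.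
Proof.
  intros Hf r Hr.
  apply (@continuous_comp R_UniformSpace (AbsRing_UniformSpace C_AbsRing) C_UniformSpace
    RtoC f r (RtoC_continuous r)).
  exact (ex_derive_continuous _ _ (Hf _ (inD_RtoC r Hr))).
Qed.

Definition ces_kernel (f : C -> C) (s : R) : C := (f (RtoC s) / (RtoC 1 - RtoC s))%C.

Lemma ces_kernel_scal (f : C -> C) (s : R) : s <> 1 ->
  ces_kernel f s = scal (/ (1 - s)) (f (RtoC s)).
Proof.
  intros Hs. rewrite scal_R_Cmult. unfold ces_kernel, Cdiv.
  rewrite <- RtoC_minus, Cmult_comm. f_equal.
  apply injective_projections; simpl; field; lra.
Qed.

Lemma ces_kernel_continuous (f : C -> C) (s : R) :
  radially_continuous f -> -1 < s < 1 ->
  @continuous R_UniformSpace C_R_NormedModule (ces_kernel f) s.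
Proof.
  intros Hf Hs.
  apply (continuous_ext_loc _ (fun u => scal (/ (1 - u)) (f (RtoC u)))).
  - exists (mkposreal (1 - s) ltac:(lra)). intros u Hu. symmetry. apply ces_kernel_scal.
    change (Rabs (u - s) < 1 - s) in Hu. apply Rabs_def2 in Hu. lra.
  - apply (@continuous_scal R_UniformSpace R_AbsRing C_R_NormedModule); [|exact (Hf s Hs)].
    apply continuity_pt_filterlim, (continuity_pt_inv (fun u => 1 - u)); [|lra].
    apply continuity_pt_minus; [apply continuity_pt_const; now intros ? ? | apply continuity_pt_id].
Qed.

Lemma continuous_ces_kernel_radial (f : C -> C) (r t : R) :
  radially_continuous f -> -1 < r < 1 -> 0 <= t <= 1 ->
  @continuous R_UniformSpace C_R_NormedModule (fun t => ces_kernel f (t * r)) t.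
Proof.
  intros Hf Hr Ht.
  apply (continuous_comp (fun t => t * r) (ces_kernel f)).
  - apply (continuous_scal_l (K := R_AbsRing) (fun t => t) r), continuous_id.
  - apply ces_kernel_continuous; [exact Hf|]. split; destruct (Rle_dec 0 r); nra.
Qed.

Lemma is_RInt_const_01 {V : NormedModule R_AbsRing} (c : V) : is_RInt (fun _ => c) 0 1 c.
Proof.
  pose proof (is_RInt_const 0 1 c) as H. rewrite Rminus_0_r in H.
  rewrite (scal_one (K := R_Ring)) in H. exact H.
Qed.

Lemma Ces_0 (f : C -> C) : Ces f (RtoC 0) = f (RtoC 0).
Proof.
  unfold Ces. destruct (Req_EM_T (Cmod (RtoC 0)) 0) as [_|E]; [reflexivity|].
  rewrite Cmod_R, Rabs_R0 in E. contradiction.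
Qed.

Lemma is_RInt_Ces (f : C -> C) (r : R) : radially_continuous f -> -1 < r < 1 ->
  @is_RInt C_R_NormedModule (fun t => ces_kernel f (t * r)) 0 1 (Ces f (RtoC r)).
Proof.
  intros Hf Hr.
  assert (Hex : @ex_RInt C_R_NormedModule (fun t => ces_kernel f (t * r)) 0 1).
  { apply (@ex_RInt_continuous C_R_CompleteNormedModule). intros t Ht.
    rewrite Rmin_left, Rmax_right in Ht by lra.
    exact (continuous_ces_kernel_radial f r t Hf Hr Ht). }
  destruct (Req_dec r 0) as [->|Hr0].
  - rewrite Ces_0. apply (is_RInt_ext (fun _ => f (RtoC 0))).
    + intros t _. rewrite Rmult_0_r, ces_kernel_scal, Rminus_0_r, Rinv_1 by lra.
      symmetry. apply (@scal_one R_Ring C_R_ModuleSpace).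
    + apply is_RInt_const_01.
  - replace (Ces f (RtoC r))
      with (@RInt C_R_CompleteNormedModule (fun t => ces_kernel f (t * r)) 0 1).
    { exact (@RInt_correct C_R_CompleteNormedModule _ _ _ Hex). }
    unfold Ces. destruct (Req_EM_T (Cmod (RtoC r)) 0) as [E|_].
    { rewrite Cmod_R in E. apply Rabs_eq_0 in E. contradiction. }
    assert (Hcint : cint0 (fun w => (f w / (RtoC 1 - w))%C) (RtoC r)
                    = scal r (@RInt C_R_CompleteNormedModule (fun t => ces_kernel f (t * r)) 0 1)).
    { rewrite <- (@RInt_scal C_R_CompleteNormedModule) by exact Hex.
      apply (@RInt_ext C_R_CompleteNormedModule). intros t _.
      rewrite scal_R_Cmult, Cmult_comm. unfold ces_kernel. now rewrite RtoC_mult. }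
    rewrite Hcint, scal_R_Cmult, Cmult_assoc, Cinv_l, Cmult_1_l; [reflexivity|].
    intros E. apply Hr0. exact (f_equal fst E).
Qed.

Lemma Ces_radially_continuous (f : C -> C) :
  radially_continuous f -> radially_continuous (Ces f).
Proof.
  intros Hf r0 Hr0.
  set (rho := (1 + Rabs r0) / 2).
  assert (Hrho : Rabs r0 < rho < 1).
  { assert (Rabs r0 < 1) by (apply Rabs_def1; lra). unfold rho; lra. }
  assert (Hc : forall x, - rho <= x <= rho ->
            @continuous R_UniformSpace C_R_NormedModule (ces_kernel f) x).
  { intros x Hx. apply ces_kernel_continuous; [exact Hf | lra]. }
  apply filterlim_locally. intros eps.
  destruct (@unifcont_normed_1d R_AbsRing C_R_NormedModule (ces_kernel f) (- rho) rho Hc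
              (pos_div_2 eps)) as [d Hd].
  assert (Hd' : 0 < Rmin d (rho - Rabs r0)) by (apply Rmin_pos; [apply cond_pos | lra]).
  exists (mkposreal _ Hd'). intros s Hs. change (Rabs (s - r0) < Rmin d (rho - Rabs r0)) in Hs.
  assert (Hsd : Rabs (s - r0) < d) by (eapply Rlt_le_trans; [exact Hs | apply Rmin_l]).
  assert (Hsr : Rabs s < rho).
  { pose proof (Rmin_r d (rho - Rabs r0)). pose proof (Rabs_triang_inv s r0). lra. }
  assert (Hs1 : -1 < s < 1) by (apply Rabs_def2 in Hsr; lra).
  apply (@norm_compat1 R_AbsRing C_R_NormedModule).
  apply Rle_lt_trans with (eps / 2); [|pose proof (cond_pos eps); lra].
  refine (norm_RInt_le _ (fun _ => eps / 2) 0 1 _ _ Rle_0_1 _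
            (is_RInt_minus _ _ 0 1 _ _ (is_RInt_Ces f s Hf Hs1) (is_RInt_Ces f r0 Hf Hr0))
            (is_RInt_const_01 (eps / 2))).
  intros t Ht. left.
  assert (Hmul : forall x, Rabs (t * x) <= Rabs x).
  { intros x. rewrite Rabs_mult, (Rabs_right t) by lra. pose proof (Rabs_pos x). nra. }
  refine (Hd (t * r0) (t * s) _ _ _).
  - apply Rabs_le_between. pose proof (Hmul r0). lra.
  - apply Rabs_le_between. pose proof (Hmul s). lra.
  - change (Rabs (t * s - t * r0) < d). rewrite <- Rmult_minus_distr_l.
    eapply Rle_lt_trans; [apply Hmul | exact Hsd].
Qed.

Lemma is_RInt_radial_derive (F dF : R -> R) (r : R) : 0 < r ->
  (forall u, 0 <= u <= r -> is_derive F u (dF u) /\ continuous dF u) ->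
  is_RInt (fun t => dF (t * r)) 0 1 ((F r - F 0) / r).
Proof.
  intros Hr HF.
  assert (HF' : forall u, 0 <= u <= r -> is_derive F u (dF u)) by (intros u Hu; apply HF, Hu).
  assert (HdF : forall u, 0 <= u <= r -> continuous dF u) by (intros u Hu; apply HF, Hu).
  pose proof (is_RInt_derive F dF 0 r) as H.
  rewrite Rmin_left, Rmax_right in H by lra.
  specialize (H HF' HdF).
  replace 0 with (r * 0 + 0) in H at 1 by ring. replace r with (r * 1 + 0) in H at 2 by ring.
  apply (is_RInt_comp_lin _ r 0 0 1) in H.
  apply (is_RInt_scal _ _ _ (/ r)) in H.
  replace ((F r - F 0) / r) with (scal (/ r) (minus (F r) (F 0)))
    by (unfold scal, minus, plus, opp; simpl; unfold mult; simpl; field; lra).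
  eapply is_RInt_ext; [|exact H].
  intros t _. unfold scal; simpl; unfold mult; simpl.
  rewrite Rplus_0_r, (Rmult_comm r t). field. lra.
Qed.

Lemma norm_C_R (z : C) : @norm R_AbsRing C_R_NormedModule z = Cmod z.
Proof.
  destruct z as [a b]. unfold Cmod.
  change (sqrt (norm a ^ 2 + norm b ^ 2) = sqrt (a ^ 2 + b ^ 2)).
  unfold norm; simpl. unfold abs; simpl.
  now rewrite !Rmult_1_r, <- !Rabs_mult, !Rabs_right by apply Rle_ge, Rle_0_sqr.
Qed.

Lemma Cmod_ces_kernel (f : C -> C) (s : R) : s < 1 ->
  Cmod (ces_kernel f s) = Cmod (f (RtoC s)) / (1 - s).
Proof.
  intros Hs. rewrite ces_kernel_scal, scal_R_Cmult, Cmod_mult, Cmod_R by lra.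
  rewrite Rabs_right by (apply Rle_ge, Rlt_le, Rinv_0_lt_compat; lra).
  apply Rmult_comm.
Qed.

(* [A/(1-r)] reproduces itself: the integral of [A/(1-tr)^2] over [0,1] is [A/(1-r)]. *)
Lemma Ces_radial_bound (f : C -> C) (A rho : R) :
  radially_continuous f -> rho < 1 ->
  (forall s, 0 <= s <= rho -> Cmod (f (RtoC s)) <= A / (1 - s)) ->
  forall r, 0 <= r <= rho -> Cmod (Ces f (RtoC r)) <= A / (1 - r).
Proof.
  intros Hf Hrho HA r Hr.
  destruct (Req_dec r 0) as [->|Hr0]; [rewrite Ces_0; apply HA; lra|].
  assert (Hint : is_RInt (fun t => A / (1 - t * r) ^ 2) 0 1 (A / (1 - r))).
  { replace (A / (1 - r)) with ((A * r / (1 - r) - A * 0 / (1 - 0)) / r) by (field; lra).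
    apply (is_RInt_radial_derive (fun u => A * u / (1 - u)) (fun u => A / (1 - u) ^ 2)); [lra|].
    intros u Hu. split.
    - auto_derive; [lra|]. field. lra.
    - apply (ex_derive_continuous (K := R_AbsRing) (V := R_NormedModule)). auto_derive. nra. }
  rewrite <- norm_C_R.
  assert (Hr1 : -1 < r < 1) by lra.
  refine (norm_RInt_le _ _ 0 1 _ _ Rle_0_1 _ (is_RInt_Ces f r Hf Hr1) Hint).
  intros t Ht. rewrite norm_C_R, Cmod_ces_kernel by nra.
  replace (A / (1 - t * r) ^ 2) with (A / (1 - t * r) / (1 - t * r)) by (field; nra).
  apply Rmult_le_compat_r; [apply Rlt_le, Rinv_0_lt_compat; nra | apply HA; nra].
Qed.

Lemma powop_Ces_0 (n : nat) (f : C -> C) : powop Ces n f (RtoC 0) = f (RtoC 0).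
Proof. induction n as [|n IH]; [reflexivity|]. simpl. now rewrite Ces_0. Qed.

Lemma powop_Ces_radially_continuous (n : nat) (f : C -> C) :
  radially_continuous f -> radially_continuous (powop Ces n f).
Proof.
  intros Hf. induction n as [|n IH]; [exact Hf|]. exact (Ces_radially_continuous _ IH).
Qed.

Lemma powop_Ces_radial_bound (n : nat) (f : C -> C) (A rho : R) :
  radially_continuous f -> rho < 1 ->
  (forall s, 0 <= s <= rho -> Cmod (f (RtoC s)) <= A / (1 - s)) ->
  forall r, 0 <= r <= rho -> Cmod (powop Ces n f (RtoC r)) <= A / (1 - r).
Proof.
  intros Hf Hrho HA. induction n as [|n IH]; [exact HA|].
  apply Ces_radial_bound; [apply powop_Ces_radially_continuous; exact Hf | exact Hrho | exact IH].
Qed.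

(** * The iterates of Ces on the constant function 1 *)

Lemma is_RInt_Ces_Re (f : C -> C) (r : R) : radially_continuous f -> -1 < r < 1 ->
  is_RInt (fun t => Re (f (RtoC (t * r))) / (1 - t * r)) 0 1 (Re (Ces f (RtoC r))).
Proof.
  intros Hf Hr.
  pose proof (@is_RInt_fct_extend_fst R_NormedModule R_NormedModule _ _ _ _
                (is_RInt_Ces f r Hf Hr)) as H.
  eapply is_RInt_ext; [|exact H]. intros t Ht. rewrite Rmin_left, Rmax_right in Ht by lra.
  cbv beta. rewrite ces_kernel_scal by nra. rewrite scal_R_Cmult.
  change (fst ?z) with (Re z). rewrite re_scal_l. apply Rmult_comm.
Qed.

Lemma Ces_real (f : C -> C) : radially_continuous f ->
  (forall s, -1 < s < 1 -> Im (f (RtoC s)) = 0) ->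
  forall r, -1 < r < 1 -> Im (Ces f (RtoC r)) = 0.
Proof.
  intros Hf Hreal r Hr.
  pose proof (@is_RInt_fct_extend_snd R_NormedModule R_NormedModule _ _ _ _
                (is_RInt_Ces f r Hf Hr)) as H.
  apply (@is_RInt_unique R_CompleteNormedModule) in H. refine (eq_trans (eq_sym H) _).
  rewrite (RInt_ext _ (fun _ => 0)), RInt_const; [apply Rmult_0_r|].
  intros t Ht. rewrite Rmin_left, Rmax_right in Ht by lra.
  rewrite ces_kernel_scal by nra. rewrite scal_R_Cmult.
  change (snd ?z) with (Im z). rewrite im_scal_l, Hreal by nra. apply Rmult_0_r.
Qed.

Definition one_fun : C -> C := fun _ => RtoC 1.

Lemma one_fun_wbound : wbound 0 one_fun 1.
Proof. intros z _. unfold vk, one_fun. rewrite pow_O, Cmod_R, Rabs_R1. lra. Qed.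

Lemma one_fun_Hv : Hv 0 one_fun.
Proof. split; [intros z _; apply ex_derive_const | exists 1; exact one_fun_wbound]. Qed.

Lemma powop_Ces_one_radially_continuous (n : nat) : radially_continuous (powop Ces n one_fun).
Proof. apply powop_Ces_radially_continuous, holo_radially_continuous, one_fun_Hv. Qed.

Definition ces_one (n : nat) (r : R) : R := Re (powop Ces n one_fun (RtoC r)).

Lemma powop_Ces_one_real (n : nat) (r : R) : -1 < r < 1 ->
  powop Ces n one_fun (RtoC r) = RtoC (ces_one n r).
Proof.
  revert r. induction n as [|n IH]; intros r Hr; [reflexivity|].
  apply injective_projections; [reflexivity|].
  change (Im (Ces (powop Ces n one_fun) (RtoC r)) = 0).
  apply Ces_real; [apply powop_Ces_one_radially_continuous | | exact Hr].
  intros s Hs. now rewrite IH.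
Qed.

Lemma is_RInt_ces_one (n : nat) (r : R) : -1 < r < 1 ->
  is_RInt (fun t => ces_one n (t * r) / (1 - t * r)) 0 1 (ces_one (S n) r).
Proof. apply is_RInt_Ces_Re, powop_Ces_one_radially_continuous. Qed.

Lemma ces_one_at_0 (n : nat) : ces_one n 0 = 1.
Proof. unfold ces_one. now rewrite powop_Ces_0. Qed.

Lemma ces_one_S_ge (n : nat) (r I : R) (g : R -> R) : 0 <= r < 1 ->
  is_RInt (fun t => g (t * r) / (1 - t * r)) 0 1 I ->
  (forall u, 0 <= u <= r -> g u <= ces_one n u) -> I <= ces_one (S n) r.
Proof.
  intros Hr HI Hg.
  apply (is_RInt_le _ _ 0 1 _ _ Rle_0_1 HI (is_RInt_ces_one n r ltac:(lra))).
  intros t Ht. apply Rmult_le_compat_r; [apply Rlt_le, Rinv_0_lt_compat; nra | apply Hg; nra].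
Qed.

Lemma ces_one_S_le (n : nat) (r I : R) (g : R -> R) : 0 <= r < 1 ->
  is_RInt (fun t => g (t * r) / (1 - t * r)) 0 1 I ->
  (forall u, 0 <= u <= r -> ces_one n u <= g u) -> ces_one (S n) r <= I.
Proof.
  intros Hr HI Hg.
  apply (is_RInt_le _ _ 0 1 _ _ Rle_0_1 (is_RInt_ces_one n r ltac:(lra)) HI).
  intros t Ht. apply Rmult_le_compat_r; [apply Rlt_le, Rinv_0_lt_compat; nra | apply Hg; nra].
Qed.

Lemma ces_one_le_S (n : nat) (r : R) : 0 <= r < 1 -> ces_one n r <= ces_one (S n) r.
Proof.
  revert r. induction n as [|n IH]; intros r Hr.
  - apply (is_RInt_le (fun _ => 1) _ 0 1 _ _ Rle_0_1 (@is_RInt_const_01 R_NormedModule 1)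
             (is_RInt_ces_one 0 r ltac:(lra))).
    intros t Ht. change (1 <= 1 / (1 - t * r)).
    apply Rle_div_r; nra.
  - apply (ces_one_S_ge (S n) r _ (ces_one n) Hr (is_RInt_ces_one n r ltac:(lra))).
    intros u Hu. apply IH. lra.
Qed.

Lemma ces_one_le (m n : nat) (r : R) : (m <= n)%nat -> 0 <= r < 1 -> ces_one m r <= ces_one n r.
Proof.
  intros Hmn Hr. induction Hmn as [|n _ IH]; [lra|].
  eapply Rle_trans; [exact IH | exact (ces_one_le_S n r Hr)].
Qed.

Lemma ces_one_ge_1 (n : nat) (r : R) : 0 <= r < 1 -> 1 <= ces_one n r.
Proof. intros Hr. apply (ces_one_le 0 n r); [lia | exact Hr]. Qed.

Definition neglog (r : R) : R := - ln (1 - r).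

Lemma neglog_0 : neglog 0 = 0.
Proof. unfold neglog. rewrite Rminus_0_r, ln_1. apply Ropp_0. Qed.

Lemma neglog_nonneg (r : R) : 0 <= r < 1 -> 0 <= neglog r.
Proof.
  intros Hr. unfold neglog.
  pose proof (ln_le (1 - r) 1 ltac:(lra) ltac:(lra)) as H. rewrite ln_1 in H. lra.
Qed.

Lemma neglog_le (r : R) : 0 <= r < 1 -> neglog r <= r * (1 + neglog r).
Proof.
  intros Hr.
  assert (Hexp : 1 + neglog r <= / (1 - r)).
  { rewrite <- (exp_ln (/ (1 - r))) by (apply Rinv_0_lt_compat; lra).
    unfold neglog. rewrite <- ln_Rinv by lra. apply exp_ineq1_le. }
  apply Rmult_le_compat_r with (r := 1 - r) in Hexp; [|lra].
  rewrite Rinv_l in Hexp by lra. lra.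
Qed.

Lemma ces_one_lower (n : nat) (r : R) : 0 <= r < 1 -> neglog r ^ n / INR (fact n) <= ces_one n r.
Proof.
  revert r. induction n as [|n IH]; intros r Hr.
  - rewrite Rdiv_1_r. apply Rle_refl.
  - destruct (Req_dec r 0) as [->|Hr0].
    { rewrite neglog_0, pow_i, Rdiv_0_l by lia. pose proof (ces_one_ge_1 (S n) 0). lra. }
    assert (Hrpos : 0 < r) by (destruct Hr as [[H|H] _]; [exact H | congruence]).
    set (F := fun u => neglog u ^ S n / INR (fact (S n))).
    assert (HI : is_RInt (fun t => neglog (t * r) ^ n / INR (fact n) / (1 - t * r)) 0 1
                   ((F r - F 0) / r)).
    { apply (is_RInt_radial_derive F (fun u => neglog u ^ n / INR (fact n) / (1 - u)));
        [exact Hrpos|].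
      intros u Hu. pose proof (INR_fact_lt_0 n). split.
      - unfold F, neglog. rewrite fact_simpl, mult_INR.
        auto_derive; [lra|].
        change (match n with 0%nat => 1 | S _ => INR n + 1 end) with (INR (S n)).
        replace (1 + - u) with (1 - u) by ring.
        field. pose proof (lt_0_INR (S n) ltac:(lia)). repeat split; lra.
      - apply (ex_derive_continuous (K := R_AbsRing) (V := R_NormedModule)).
        unfold neglog. auto_derive. repeat split; lra. }
    eapply Rle_trans;
      [|apply (ces_one_S_ge n r _ (fun u => neglog u ^ n / INR (fact n)) Hr HI);
        intros u Hu; apply IH; lra].
    assert (HF : 0 <= F r).
    { apply Rdiv_le_0_compat; [apply pow_le, neglog_nonneg, Hr | apply INR_fact_lt_0]. }
    assert (HF0 : F 0 = 0) by (unfold F; rewrite neglog_0, pow_i by lia; apply Rdiv_0_l).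
    rewrite HF0, Rminus_0_r.
    pose proof (Rinv_le_contravar r 1 Hrpos ltac:(lra)) as Hinv. rewrite Rinv_1 in Hinv.
    change (F r <= F r * / r). nra.
Qed.

Lemma pow_S_sub_1_le (a : R) (n : nat) : 1 <= a -> a ^ S n - 1 <= INR (S n) * (a - 1) * a ^ n.
Proof.
  intros Ha. induction n as [|n IH]; [simpl; lra|].
  assert (1 <= a ^ S n) by (apply pow_R1_Rle, Ha).
  replace (a ^ S (S n) - 1) with (a * (a ^ S n - 1) + (a - 1)) by (simpl; ring).
  apply Rle_trans with (a * (INR (S n) * (a - 1) * a ^ n) + (a - 1) * a ^ S n).
  - apply Rplus_le_compat; [apply Rmult_le_compat_l; lra | nra].
  - rewrite (S_INR (S n)). simpl. lra.
Qed.

Lemma neglog_pow_S_bound (n : nat) (r : R) : 0 < r < 1 ->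
  ((1 + neglog r) ^ S n - 1) / (INR (S n) * r) <= (1 + neglog r) ^ S n.
Proof.
  intros Hr. set (a := 1 + neglog r).
  assert (Ha : a - 1 <= r * a) by (unfold a; pose proof (neglog_le r ltac:(lra)); lra).
  assert (Ha1 : 1 <= a) by (unfold a; pose proof (neglog_nonneg r ltac:(lra)); lra).
  pose proof (pow_S_sub_1_le a n Ha1) as Hpow.
  assert (0 <= a ^ n) by (apply pow_le; lra).
  pose proof (lt_0_INR (S n) ltac:(lia)).
  apply Rle_div_l; [nra|].
  replace (a ^ S n * (INR (S n) * r)) with (INR (S n) * (r * a) * a ^ n) by (simpl; ring).
  eapply Rle_trans; [exact Hpow|]. apply Rmult_le_compat_r; [lra|]. apply Rmult_le_compat_l; lra.
Qed.

Lemma ces_one_upper (n : nat) (r : R) : 0 <= r < 1 -> ces_one n r <= (1 + neglog r) ^ n.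
Proof.
  revert r. induction n as [|n IH]; intros r Hr.
  - change (1 <= 1). lra.
  - destruct (Req_dec r 0) as [->|Hr0].
    { rewrite ces_one_at_0, neglog_0, Rplus_0_r, pow1. lra. }
    assert (Hrpos : 0 < r) by (destruct Hr as [[H|H] _]; [exact H | congruence]).
    set (F := fun u => (1 + neglog u) ^ S n / INR (S n)).
    assert (HI : is_RInt (fun t => (1 + neglog (t * r)) ^ n / (1 - t * r)) 0 1 ((F r - F 0) / r)).
    { apply (is_RInt_radial_derive F (fun u => (1 + neglog u) ^ n / (1 - u))); [exact Hrpos|].
      intros u Hu. split.
      - unfold F, neglog. auto_derive; [lra|].
        change (match n with 0%nat => 1 | S _ => INR n + 1 end) with (INR (S n)).
        replace (1 + - u) with (1 - u) by ring.
        field. pose proof (lt_0_INR (S n) ltac:(lia)). split; lra.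
      - apply (ex_derive_continuous (K := R_AbsRing) (V := R_NormedModule)).
        unfold neglog. auto_derive. repeat split; lra. }
    eapply Rle_trans;
      [apply (ces_one_S_le n r _ (fun u => (1 + neglog u) ^ n) Hr HI); intros u Hu; apply IH; lra|].
    replace ((F r - F 0) / r) with (((1 + neglog r) ^ S n - 1) / (INR (S n) * r)).
    + apply neglog_pow_S_bound. lra.
    + unfold F. rewrite neglog_0, Rplus_0_r, pow1. field. split; [apply not_0_INR; lia | lra].
Qed.

Definition radius_at (l : R) : R := 1 - exp (- l).

Lemma radius_at_range (l : R) : 0 < l -> 0 < radius_at l < 1.
Proof.
  intros Hl. unfold radius_at. pose proof (exp_pos (- l)).
  assert (exp (- l) < 1) by (rewrite <- exp_0; apply exp_increasing; lra). lra.
Qed.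

Lemma neglog_radius_at (l : R) : neglog (radius_at l) = l.
Proof.
  unfold neglog, radius_at. replace (1 - (1 - exp (- l))) with (exp (- l)) by ring.
  rewrite ln_exp. apply Ropp_involutive.
Qed.

Lemma vk_radius_at (k : nat) (l : R) : 1 < l -> vk k (RtoC (radius_at l)) = (/ l) ^ k.
Proof.
  intros Hl. pose proof (radius_at_range l ltac:(lra)) as Hx.
  unfold vk, v. rewrite Cmod_R, Rabs_right by lra.
  destruct (Rle_dec (radius_at l) (1 - / exp 1)) as [E|_].
  - unfold radius_at in E. rewrite <- exp_Ropp in E.
    pose proof (exp_increasing (- l) (- (1)) ltac:(lra)). lra.
  - fold (neglog (radius_at l)). now rewrite neglog_radius_at.
Qed.

Lemma vk_inner (k : nat) (z : C) : Cmod z <= 1 - / exp 1 -> vk k z = 1.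
Proof.
  intros H. unfold vk, v. destruct (Rle_dec (Cmod z) (1 - / exp 1)); [apply pow1 | contradiction].
Qed.

Lemma vk_le_half (k : nat) (r : R) : 0 <= r <= 1 / 2 -> vk k (RtoC r) = 1.
Proof.
  intros Hr. apply vk_inner. rewrite Cmod_R, Rabs_right by lra.
  assert (He : 2 < exp 1) by (pose proof (exp_ineq1 1 ltac:(lra)); lra).
  pose proof (Rinv_lt_contravar 2 (exp 1) ltac:(lra) He). lra.
Qed.

Lemma vk_pos (k : nat) (z : C) : inD z -> 0 < vk k z.
Proof.
  intros Hz. unfold inD in Hz. apply pow_lt. unfold v.
  destruct (Rle_dec (Cmod z) (1 - / exp 1)) as [_|E]; [lra|].
  apply Rinv_0_lt_compat.
  assert (Hlt : 1 - Cmod z < / exp 1) by lra.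
  rewrite <- exp_Ropp in Hlt. apply ln_increasing in Hlt; [|pose proof (Cmod_ge_0 z); lra].
  rewrite ln_exp in Hlt. lra.
Qed.

Lemma wbound_vk (k : nat) (f : C -> C) (M : R) (z : C) : inD z -> wbound k f M ->
  Cmod (f z) <= M / vk k z.
Proof.
  intros Hz HM. pose proof (vk_pos k z Hz). apply Rle_div_r; [lra|].
  rewrite Rmult_comm. exact (HM z Hz).
Qed.

Lemma Sup_seq_bounded (u : nat -> R) (B : R) : (forall j, u j <= B) ->
  let s := real (Sup_seq (fun j => Finite (u j))) in
  Sup_seq (fun j => Finite (u j)) = Finite s /\ (forall j, u j <= s) /\ s <= B.
Proof.
  intros HB s.
  destruct (is_sup_seq_lub _ _ (Sup_seq_correct (fun j => Finite (u j)))) as [Hub Hlub].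
  assert (Hle : Rbar_le (Sup_seq (fun j => Finite (u j))) B).
  { apply Hlub. intros x [j ->]. exact (HB j). }
  assert (Hge : forall j, Rbar_le (u j) (Sup_seq (fun j => Finite (u j)))).
  { intros j. apply Hub. exists j. reflexivity. }
  unfold s. destruct (Sup_seq (fun j => Finite (u j))) as [t| |]; simpl in *.
  - repeat split; assumption.
  - contradiction.
  - exact (False_ind _ (Hge 0%nat)).
Qed.

(** * Weighted-sup seminorms on VH(D) *)

(* [real] sends an infinite supremum to [0]; the seminorm axioms are only claimed on VH,
   where the supremum is finite. *)
Definition wsup (w : nat -> R) (z : nat -> C) (f : C -> C) : R :=
  real (Sup_seq (fun j => Finite (w j * Cmod (f (z j))))).

Lemma wsup_bounded (w : nat -> R) (z : nat -> C) (f : C -> C) (B : R) :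
  (forall j, w j * Cmod (f (z j)) <= B) ->
  (forall j, w j * Cmod (f (z j)) <= wsup w z f) /\ wsup w z f <= B.
Proof. intros HB. apply (Sup_seq_bounded _ B HB). Qed.

Section WeightedSup.

Variables (w : nat -> R) (z : nat -> C).
Hypothesis w_nonneg : forall j, 0 <= w j.
Hypothesis z_inD : forall j, inD (z j).
Hypothesis w_dominated : forall k, exists B, 0 <= B /\ forall j, w j <= B * vk k (z j).

Lemma wsup_wbound (k : nat) (B : R) (f : C -> C) (M : R) :
  0 <= B -> (forall j, w j <= B * vk k (z j)) -> wbound k f M ->
  forall j, w j * Cmod (f (z j)) <= B * M.
Proof.
  intros HB Hw HM j.
  apply Rle_trans with (B * vk k (z j) * Cmod (f (z j))).
  - apply Rmult_le_compat_r; [apply Cmod_ge_0 | apply Hw].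
  - rewrite Rmult_assoc. apply Rmult_le_compat_l; [exact HB | exact (HM _ (z_inD j))].
Qed.

Lemma wsup_VH (f : C -> C) : VH f -> exists B, forall j, w j * Cmod (f (z j)) <= B.
Proof.
  intros [k [_ [M HM]]]. destruct (w_dominated k) as [B [HB Hw]].
  exists (B * M). exact (wsup_wbound k B f M HB Hw HM).
Qed.

Lemma cont_seminorm_wsup : cont_seminorm (wsup w z).
Proof.
  split; [split; [|split]|].
  - intros f Hf. destruct (wsup_VH f Hf) as [B HB]. destruct (wsup_bounded w z f B HB) as [Hub _].
    eapply Rle_trans; [|exact (Hub 0%nat)]. apply Rmult_le_pos; [apply w_nonneg | apply Cmod_ge_0].
  - intros f g Hf Hg.
    destruct (wsup_VH f Hf) as [Bf HBf]. destruct (wsup_bounded w z f Bf HBf) as [Hf' _].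
    destruct (wsup_VH g Hg) as [Bg HBg]. destruct (wsup_bounded w z g Bg HBg) as [Hg' _].
    apply (wsup_bounded w z (fadd f g)). intros j. unfold fadd.
    specialize (Hf' j). specialize (Hg' j). pose proof (w_nonneg j).
    pose proof (Cmod_triangle (f (z j)) (g (z j))). nra.
  - intros a f Hf. destruct (wsup_VH f Hf) as [B HB].
    destruct (Sup_seq_bounded _ B HB) as [Hfin _]. unfold wsup.
    rewrite (Sup_seq_ext _ (fun j => Rbar_mult (Cmod a) (w j * Cmod (f (z j))))).
    + rewrite Sup_seq_scal_l, Hfin by apply Cmod_ge_0. reflexivity.
    + intros j. simpl. unfold fscal. rewrite Cmod_mult. f_equal. ring.
  - intros k. destruct (w_dominated k) as [B [HB Hw]]. exists B. intros f M _ HM.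
    apply (wsup_bounded w z f), (wsup_wbound k B f M HB Hw HM).
Qed.

End WeightedSup.

Definition two_points (a b : C) (j : nat) : C := match j with O => a | S _ => b end.

(* [max (|f a|, |f b|)]; for [a = b] this is point evaluation. *)
Definition eval2 (a b : C) : (C -> C) -> R := wsup (fun _ => 1) (two_points a b).

Lemma cont_seminorm_eval2 (a b : C) : inD a -> inD b -> cont_seminorm (eval2 a b).
Proof.
  intros Ha Hb. apply cont_seminorm_wsup.
  - intros _. lra.
  - intros [|j]; assumption.
  - intros k. pose proof (vk_pos k a Ha). pose proof (vk_pos k b Hb).
    assert (0 < / vk k a) by (apply Rinv_0_lt_compat; lra).
    assert (0 < / vk k b) by (apply Rinv_0_lt_compat; lra).
    exists (/ vk k a + / vk k b). split; [lra|].
    intros [|j]; simpl; rewrite Rmult_plus_distr_r.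
    + rewrite Rinv_l by lra. pose proof (Rmult_lt_0_compat (/ vk k b) (vk k a)). lra.
    + rewrite (Rinv_l (vk k b)) by lra. pose proof (Rmult_lt_0_compat (/ vk k a) (vk k b)). lra.
Qed.

Lemma eval2_ge (a b : C) (f : C -> C) : Cmod (f a) <= eval2 a b f /\ Cmod (f b) <= eval2 a b f.
Proof.
  unfold eval2.
  destruct (wsup_bounded (fun _ => 1) (two_points a b) f (Cmod (f a) + Cmod (f b))) as [H _].
  { pose proof (Cmod_ge_0 (f a)). pose proof (Cmod_ge_0 (f b)). intros [|j]; simpl; lra. }
  pose proof (H 0%nat) as H0. pose proof (H 1%nat) as H1. simpl in H0, H1. split; lra.
Qed.

(** * Ces is not supercyclic *)

Definition affine (c : C) : C -> C := fun u => (RtoC 1 + u * c)%C.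

Lemma affine_VH (c : C) : VH (affine c).
Proof.
  exists 0%nat. split.
  - intros z _. unfold affine.
    apply (@ex_derive_plus C_AbsRing C_NormedModule (fun _ => RtoC 1) (fun u => scal u c)).
    + apply ex_derive_const.
    + eexists. apply (@is_derive_scal_l C_AbsRing C_NormedModule (fun u => u)), is_derive_id.
  - exists (1 + Cmod c). intros z Hz. unfold vk, affine. rewrite pow_O, Rmult_1_l.
    eapply Rle_trans; [apply Cmod_triangle|]. rewrite Cmod_1, Cmod_mult.
    unfold inD in Hz. pose proof (Cmod_ge_0 c). pose proof (Cmod_ge_0 z). nra.
Qed.

Lemma scaled_pair_gap (lam a b : C) (M : R) :
  Cmod (lam * a - RtoC 1) < 1 / 2 -> Cmod b <= 2 * M ->
  1 <= Cmod (lam * b - RtoC (1 + 3 * M / Cmod a)).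
Proof.
  intros Ha Hb. pose proof (Cmod_ge_0 b). pose proof (Cmod_ge_0 lam).
  assert (Ha0 : 0 < Cmod a).
  { destruct (Cmod_ge_0 a) as [|E]; [assumption|].
    apply eq_sym, Cmod_eq_0 in E. subst a.
    replace (lam * 0 - RtoC 1)%C with (- RtoC 1)%C in Ha by ring.
    rewrite Cmod_opp, Cmod_1 in Ha. lra. }
  assert (Hlam : Cmod lam * Cmod a < 3 / 2).
  { rewrite <- Cmod_mult. replace (lam * a)%C with ((lam * a - RtoC 1) + RtoC 1)%C by ring.
    pose proof (Cmod_triangle (lam * a - RtoC 1) (RtoC 1)). rewrite Cmod_1 in H1. lra. }
  assert (Hlamb : Cmod (lam * b) <= 3 * M / Cmod a).
  { rewrite Cmod_mult. apply (Rle_div_r _ _ _ Ha0). nra. }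
  set (W := 1 + 3 * M / Cmod a).
  assert (HW : Cmod (RtoC W) = W).
  { rewrite Cmod_R. apply Rabs_right. unfold W.
    pose proof (Rle_trans _ _ _ (Cmod_ge_0 _) Hlamb). lra. }
  pose proof (Cmod_triangle (- (lam * b - RtoC W)) (lam * b)) as Htri.
  replace (- (lam * b - RtoC W) + lam * b)%C with (RtoC W) in Htri by ring.
  rewrite Cmod_opp, HW in Htri. unfold W in *. lra.
Qed.

Theorem Ces_not_supercyclic : ~ supercyclic_VH Ces.
Proof.
  intros [z [[k [Hz [M HM]]] Hdense]].
  assert (Hbound : forall n, Cmod (powop Ces n z (RtoC (1 / 2))) <= 2 * M).
  { intros n. replace (2 * M) with (M / (1 - 1 / 2)) by field.
    apply (powop_Ces_radial_bound n z M (1 / 2));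
      [apply holo_radially_continuous, Hz | lra | | lra].
    intros s Hs. pose proof (HM _ (inD_RtoC s ltac:(lra))) as Hs'.
    rewrite vk_le_half, Rmult_1_l in Hs' by lra.
    pose proof (Cmod_ge_0 (z (RtoC s))).
    apply Rle_trans with M; [exact Hs'|]. apply Rle_div_r; [lra | nra]. }
  set (W := 1 + 3 * M / Cmod (z (RtoC 0))).
  set (g := affine (RtoC (2 * (W - 1)))).
  destruct (Hdense g (affine_VH _) (eval2 (RtoC 0) (RtoC (1 / 2)))
              (cont_seminorm_eval2 _ _ (inD_RtoC 0 ltac:(lra)) (inD_RtoC (1 / 2) ltac:(lra)))
              (1 / 2) ltac:(lra)) as [lam [n Hn]].
  destruct (eval2_ge (RtoC 0) (RtoC (1 / 2)) (fsub (fscal lam (powop Ces n z)) g)) as [H0 H1].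
  apply (fun H => Rle_lt_trans _ _ _ H Hn) in H0. apply (fun H => Rle_lt_trans _ _ _ H Hn) in H1.
  unfold fsub, fscal, g, affine in H0, H1. rewrite powop_Ces_0 in H0.
  replace (RtoC 1 + RtoC 0 * RtoC (2 * (W - 1)))%C with (RtoC 1) in H0 by ring.
  replace (RtoC 1 + RtoC (1 / 2) * RtoC (2 * (W - 1)))%C with (RtoC W) in H1
    by (rewrite <- RtoC_mult, <- RtoC_plus; f_equal; field).
  pose proof (scaled_pair_gap lam _ _ M H0 (Hbound n)). fold W in H. lra.
Qed.

(** * Ces is not mean ergodic *)

Lemma psum_ces_one_nonneg (N : nat) (x : R) : 0 <= x < 1 ->
  0 <= Re (psum Ces N one_fun (RtoC x)).
Proof.
  intros Hx. induction N as [|N IH]; [simpl; lra|].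
  change (0 <= Re (psum Ces N one_fun (RtoC x)) + ces_one (S N) x).
  pose proof (ces_one_ge_1 (S N) x Hx). lra.
Qed.

Lemma psum_ces_one_lower (N K : nat) (x : R) : 0 <= x < 1 ->
  (INR N - INR K) * ces_one K x <= Re (psum Ces N one_fun (RtoC x)).
Proof.
  intros Hx. pose proof (ces_one_ge_1 K x Hx).
  induction N as [|N IH]; [simpl; pose proof (pos_INR K); nra|].
  change ((INR (S N) - INR K) * ces_one K x
          <= Re (psum Ces N one_fun (RtoC x)) + ces_one (S N) x).
  rewrite S_INR. destruct (Nat.le_gt_cases K (S N)) as [HK|HK].
  - pose proof (ces_one_le K (S N) x HK Hx). lra.
  - apply lt_INR in HK. rewrite S_INR in HK.
    pose proof (psum_ces_one_nonneg N x Hx). pose proof (ces_one_ge_1 (S N) x Hx). nra.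
Qed.

Lemma cesmean_ces_one_ge (N K : nat) (x : R) : (0 < N)%nat -> (2 * K <= N)%nat -> 0 <= x < 1 ->
  ces_one K x / 2 <= Re (cesmean Ces N one_fun (RtoC x)).
Proof.
  intros HN HKN Hx. unfold cesmean, fscal. rewrite re_scal_l.
  pose proof (psum_ces_one_lower N K x Hx). pose proof (ces_one_ge_1 K x Hx).
  apply lt_INR in HN. apply le_INR in HKN. rewrite mult_INR in HKN. simpl in HN, HKN.
  apply Rmult_le_reg_l with (INR N); [exact HN|].
  rewrite <- Rmult_assoc, Rinv_r, Rmult_1_l by lra. nra.
Qed.

Lemma exists_level (k : nat) (M : R) :
  exists l, 1 < l /\ 2 * (M * l ^ k + 1) <= l ^ S k / INR (fact (S k)).
Proof.
  pose proof (INR_fact_lt_0 (S k)) as HF. pose proof (Rabs_pos M). pose proof (Rle_abs M).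
  set (l := 2 * INR (fact (S k)) * (Rabs M + 1) + 2).
  assert (Hl : 1 < l) by (unfold l; nra).
  exists l. split; [exact Hl|].
  assert (Hlk : 1 <= l ^ k) by (apply pow_R1_Rle; lra).
  assert (INR (fact (S k)) * l ^ k * M <= INR (fact (S k)) * l ^ k * Rabs M)
    by (apply Rmult_le_compat_l; nra).
  apply (Rle_div_r (2 * (M * l ^ k + 1)) (l ^ S k) _ HF). simpl (l ^ S k). unfold l at 2. nra.
Qed.

Theorem Ces_not_mean_ergodic : ~ mean_ergodic_VH Ces.
Proof.
  intros ME.
  destruct (ME one_fun (ex_intro _ 0%nat one_fun_Hv)) as [g [[k [_ [M HM]]] Hlim]].
  destruct (exists_level k M) as [l [Hl Hgrowth]].
  set (x := radius_at l).
  assert (Hx : 0 <= x < 1) by (pose proof (radius_at_range l); unfold x; lra).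
  assert (Hg : Cmod (g (RtoC x)) <= M * l ^ k).
  { pose proof (wbound_vk k g M (RtoC x) (inD_RtoC x ltac:(lra)) HM) as H.
    unfold x in H. rewrite vk_radius_at, pow_inv in H by lra.
    unfold Rdiv in H. now rewrite Rinv_inv in H. }
  assert (HK : l ^ S k / INR (fact (S k)) <= ces_one (S k) x).
  { rewrite <- (neglog_radius_at l). apply ces_one_lower. exact Hx. }
  specialize (Hlim (eval2 (RtoC x) (RtoC x))
                (cont_seminorm_eval2 _ _ (inD_RtoC x ltac:(lra)) (inD_RtoC x ltac:(lra)))).
  apply is_lim_seq_spec in Hlim. destruct (Hlim (mkposreal 1 Rlt_0_1)) as [N0 HN0].
  specialize (HN0 (N0 + 2 * S k)%nat ltac:(lia)). cbv beta in HN0.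
  set (N := S (N0 + 2 * S k)) in HN0. cbn [pos] in HN0. rewrite Rminus_0_r in HN0.
  apply Rabs_def2 in HN0.
  destruct (eval2_ge (RtoC x) (RtoC x) (fsub (cesmean Ces N one_fun) g)) as [Hev _].
  pose proof (cesmean_ces_one_ge N (S k) x ltac:(unfold N; lia) ltac:(unfold N; lia) Hx).
  pose proof (Rle_abs (Re (fsub (cesmean Ces N one_fun) g (RtoC x)))).
  pose proof (re_le_Cmod (fsub (cesmean Ces N one_fun) g (RtoC x))).
  pose proof (Rle_abs (Re (g (RtoC x)))). pose proof (re_le_Cmod (g (RtoC x))).
  change (Re (fsub (cesmean Ces N one_fun) g (RtoC x)))
    with (Re (cesmean Ces N one_fun (RtoC x)) - Re (g (RtoC x))) in *.
  lra.
Qed.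

(** * Ces is not power bounded *)

(* The weights [level j ^ -j] decay fast enough for continuity on each H^inf_{v_k}, yet
   [level j ^ (2j) / (2j)! >= j * level j ^ j], so Ces^(2j) 1 has weighted value at least j. *)
Definition level (j : nat) : R := INR (fact (2 * j + 2)).

Definition level_point (j : nat) : C := RtoC (radius_at (level j)).

Definition level_weight (j : nat) : R := / level j ^ j.

Lemma level_ge_2 (j : nat) : 2 <= level j.
Proof.
  unfold level. replace 2 with (INR 2) by reflexivity. apply le_INR.
  replace (2 * j + 2)%nat with (S (S (2 * j))) by lia. rewrite !fact_simpl.
  pose proof (lt_O_fact (2 * j)). nia.
Qed.

Lemma level_le (i j : nat) : (i <= j)%nat -> level i <= level j.
Proof. intros H. apply le_INR, fact_le. lia. Qed.

Lemma level_fact_lower (j : nat) : INR j * INR (fact (2 * j)) <= level j.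
Proof.
  unfold level. rewrite <- mult_INR. apply le_INR.
  replace (2 * j + 2)%nat with (S (S (2 * j))) by lia. rewrite !fact_simpl. nia.
Qed.

Lemma level_weight_pos (j : nat) : 0 < level_weight j.
Proof. apply Rinv_0_lt_compat, pow_lt. pose proof (level_ge_2 j). lra. Qed.

Lemma vk_level_point (k j : nat) : vk k (level_point j) = / level j ^ k.
Proof.
  unfold level_point. rewrite vk_radius_at, pow_inv; [reflexivity|].
  pose proof (level_ge_2 j). lra.
Qed.

Lemma level_weight_dominated (k : nat) :
  exists B, 0 <= B /\ forall j, level_weight j <= B * vk k (level_point j).
Proof.
  exists (level k ^ k). pose proof (level_ge_2 k). split; [apply pow_le; lra|].
  intros j. rewrite vk_level_point. unfold level_weight.
  pose proof (level_ge_2 j) as Hj.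
  assert (0 < level j ^ k) by (apply pow_lt; lra).
  assert (0 < level j ^ j) by (apply pow_lt; lra).
  apply (Rmult_le_reg_r (level j ^ j * level j ^ k)); [nra|].
  replace (/ level j ^ j * (level j ^ j * level j ^ k)) with (level j ^ k) by (field; lra).
  replace (level k ^ k * / level j ^ k * (level j ^ j * level j ^ k))
    with (level k ^ k * level j ^ j) by (field; lra).
  destruct (Nat.le_gt_cases k j) as [Hkj|Hkj].
  - pose proof (Rle_pow (level j) k j ltac:(lra) Hkj).
    pose proof (pow_R1_Rle (level k) k ltac:(lra)). nra.
  - pose proof (pow_incr (level j) (level k) k ltac:(split; [lra | apply level_le; lia])).
    pose proof (pow_R1_Rle (level j) j ltac:(lra)). nra.
Qed.

Lemma cont_seminorm_level : cont_seminorm (wsup level_weight level_point).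
Proof.
  apply cont_seminorm_wsup.
  - intros j. apply Rlt_le, level_weight_pos.
  - intros j. apply inD_RtoC. pose proof (level_ge_2 j).
    pose proof (radius_at_range (level j) ltac:(lra)). lra.
  - exact level_weight_dominated.
Qed.

Lemma level_term_ces_one (n j : nat) :
  level_weight j * Cmod (powop Ces n one_fun (level_point j))
  = ces_one n (radius_at (level j)) / level j ^ j.
Proof.
  pose proof (level_ge_2 j). pose proof (radius_at_range (level j) ltac:(lra)).
  unfold level_point. rewrite powop_Ces_one_real, Cmod_R by lra.
  rewrite Rabs_right by (pose proof (ces_one_ge_1 n (radius_at (level j)) ltac:(lra)); lra).
  apply Rmult_comm.
Qed.

Lemma level_term_upper (n j : nat) :
  level_weight j * Cmod (powop Ces n one_fun (level_point j)) <= 2 ^ n + (1 + level n) ^ n.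
Proof.
  rewrite level_term_ces_one. set (l := level j).
  pose proof (level_ge_2 j) as Hl. fold l in Hl.
  pose proof (ces_one_upper n (radius_at l) ltac:(pose proof (radius_at_range l); lra)) as Hup.
  rewrite neglog_radius_at in Hup.
  assert (Hlj : 1 <= l ^ j) by (apply pow_R1_Rle; lra).
  assert (0 <= 2 ^ n) by (apply pow_le; lra).
  assert (0 <= (1 + level n) ^ n) by (pose proof (level_ge_2 n); apply pow_le; lra).
  apply (Rle_div_l _ _ (l ^ j)); [lra|].
  destruct (Nat.le_gt_cases n j) as [Hnj|Hnj].
  - pose proof (pow_incr (1 + l) (2 * l) n ltac:(lra)). rewrite Rpow_mult_distr in H1.
    pose proof (Rle_pow l n j ltac:(lra) Hnj). nra.
  - pose proof (pow_incr (1 + l) (1 + level n) n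
                  ltac:(split; [lra | apply Rplus_le_compat_l, level_le; lia])). nra.
Qed.

Lemma level_term_lower (j : nat) :
  INR j <= level_weight j * Cmod (powop Ces (2 * j) one_fun (level_point j)).
Proof.
  rewrite level_term_ces_one. set (l := level j).
  pose proof (level_ge_2 j) as Hl. fold l in Hl.
  pose proof (radius_at_range l ltac:(lra)).
  pose proof (ces_one_lower (2 * j) (radius_at l) ltac:(lra)) as Hlow.
  rewrite neglog_radius_at in Hlow.
  pose proof (INR_fact_lt_0 (2 * j)) as HF.
  pose proof (level_fact_lower j) as Hfl. fold l in Hfl.
  assert (Hlj : 0 < l ^ j) by (apply pow_lt; lra).
  apply (Rle_div_r _ _ _ Hlj). eapply Rle_trans; [|exact Hlow].
  apply (Rle_div_r _ _ _ HF).
  replace (l ^ (2 * j)) with (l ^ j * l ^ j) by (rewrite <- pow_add; f_equal; lia).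
  destruct j as [|j']; [simpl; lra|].
  assert (l <= l ^ S j') by (simpl; pose proof (pow_R1_Rle l j' ltac:(lra)); nra).
  nra.
Qed.

Theorem Ces_not_power_bounded : ~ power_bounded_VH Ces.
Proof.
  intros PB.
  destruct (PB _ cont_seminorm_level) as [q [[_ Hq] Hpq]].
  destruct (Hq 0%nat) as [c Hc].
  pose proof (Hc one_fun 1 one_fun_Hv one_fun_wbound) as Hq1.
  destruct (INR_unbounded c) as [j Hj].
  pose proof (Hpq (2 * j)%nat one_fun (ex_intro _ 0%nat one_fun_Hv)) as Hle.
  destruct (wsup_bounded level_weight level_point (powop Ces (2 * j) one_fun) _
              (level_term_upper (2 * j))) as [Hub _].
  pose proof (level_term_lower j). specialize (Hub j). lra.
Qed.

Theorem proposition2p6 :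
  ~ power_bounded_VH Ces /\ ~ mean_ergodic_VH Ces /\ ~ supercyclic_VH Ces.
Proof.
  exact (conj Ces_not_power_bounded (conj Ces_not_mean_ergodic Ces_not_supercyclic)).
Qed.
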